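(* Let $I,J$ be infinite sets with $|I|<|J|$. Then $\mathbf{Lat}_I$ does not have 2-fold subobject decompositions over $J$: there exist a family $(L_j)_{j\in J}$ of $I$-complete lattices and two distinct $I$-complete sublattices $S\neq T$ of $\prod_{j\in J}L_j$ whose images under the projection $\prod_{j\in J}L_j\to L_k\times L_l$ coincide for all distinct $k,l\in J$.
   Context: An $I$-complete lattice is a lattice in which every family $(x_i)_{i\in I}$ of elements has a meet and a join; homomorphisms preserve $I$-indexed meets and joins; $\mathbf{Lat}_I$ is the resulting category, with componentwise products and with subobjects the $I$-complete sublattices. A category has 2-fold subobject decompositions over $J$ if for every $J$-indexed family of objects, any two subobjects of their product having the same images in all products $L_k\times L_l$ ($k\neq l$ in $J$) are equal. *)

From Stdlib Require Import List.

Set Implicit Arguments.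

Definition infinite (T : Type) : Prop :=
  ~ (exists l : list T, forall x : T, In x l).

Definition card_lt (I J : Type) : Prop :=
  (exists f : I -> J, forall x y, f x = f y -> x = y) /\
  ~ (exists g : J -> I, forall x y, g x = g y -> x = y).

Section Order.
Variable (L : Type) (le : L -> L -> Prop).

Definition is_partial_order : Prop :=
  (forall x, le x x) /\
  (forall x y z, le x y -> le y z -> le x z) /\
  (forall x y, le x y -> le y x -> x = y).

Definition is_glb (K : Type) (f : K -> L) (m : L) : Prop :=
  (forall k, le m (f k)) /\ (forall z, (forall k, le z (f k)) -> le z m).

Definition is_lub (K : Type) (f : K -> L) (s : L) : Prop :=
  (forall k, le (f k) s) /\ (forall z, (forall k, le (f k) z) -> le s z).

Definition is_lattice : Prop :=
  is_partial_order /\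
  (forall f : bool -> L, exists m, is_glb f m) /\
  (forall f : bool -> L, exists s, is_lub f s).

Definition is_I_complete_lattice (I : Type) : Prop :=
  is_lattice /\
  (forall f : I -> L, exists m, is_glb f m) /\
  (forall f : I -> L, exists s, is_lub f s).

Definition is_I_complete_sublattice (I : Type) (S : L -> Prop) : Prop :=
  (forall (f : bool -> L) m, (forall b, S (f b)) -> is_glb f m -> S m) /\
  (forall (f : bool -> L) s, (forall b, S (f b)) -> is_lub f s -> S s) /\
  (forall (f : I -> L) m, (forall i, S (f i)) -> is_glb f m -> S m) /\
  (forall (f : I -> L) s, (forall i, S (f i)) -> is_lub f s -> S s).

End Order.

Definition prod_le (J : Type) (L : J -> Type) (le : forall j, L j -> L j -> Prop)
  (x y : forall j, L j) : Prop := forall j, le j (x j) (y j).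

Definition proj2_image (J : Type) (L : J -> Type) (S : (forall j, L j) -> Prop)
  (k l : J) (p : L k * L l) : Prop :=
  exists x, S x /\ x k = fst p /\ x l = snd p.

(* Take every L_j to be the two-element lattice, so that the product is the
   powerset of J; let T be everything and S the subsets of J of cardinality at
   most |I|.  Subsets with at most two elements lie in S, so S and T have the
   same images in every L_k * L_l, while J itself is not in S as |I| < |J|.
   S is downward closed, hence closed under meets, and it is closed under
   I-indexed joins because a union of |I| sets of size at most |I| has size at
   most |I * I| = |I|.  This last equality (Hessenberg) comes from Zorn's lemma:
   a maximal A carrying an injection A * A -> A cannot absorb a disjoint copy
   of itself, so by comparability of cardinals the complement of A embeds into
   A, and then the whole type embeds into A + A, which embeds into A * A. *)

From mathcomp Require Import ssreflect ssrfun ssrbool eqtype ssrnat choice.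
From mathcomp Require Import boolp classical_sets.

Set Implicit Arguments.
Unset Strict Implicit.
Unset Printing Implicit Defensive.

Local Open Scope classical_set_scope.

Definition set_pairwise T (R : T -> T -> Prop) (X : set T) : Prop :=
  forall p q, X p -> X q -> R p q.

Lemma bigcup_chain_pairwise T (R : T -> T -> Prop) (F : set (set T)) :
  (forall X, F X -> set_pairwise R X) -> total_on F subset ->
  set_pairwise R (\bigcup_(X in F) X).
Proof.
move=> FR Ftot p q [X FX Xp] [Y FY Yq].
by have [XY|YX] := Ftot X Y FX FY; [apply: (FR Y) => //; apply: XY|
  apply: (FR X) => //; apply: YX].
Qed.

Lemma Zorn_bigcup_above T (P : set (set T)) (B : set T) : P B ->
  (forall F, F `<=` P -> total_on F subset -> P (\bigcup_(X in F) X)) ->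
  exists A, [/\ B `<=` A, P A & forall C, A `<` C -> ~ P C].
Proof.
move=> PB Pchain.
case: (@Zorn_bigcup T (fun X => P (B `|` X))) => [F FP Ftot|X [PBX Xmax]].
  have [[X0 FX0]|F0] := pselect (F !=set0).
    have -> : B `|` \bigcup_(X in F) X = \bigcup_(Y in setU B @` F) Y.
      apply/seteqP; split=> [t [Bt|[X FX Xt]]|t [_ [X FX <-] [Bt|Xt]]].
      - by exists (B `|` X0); [exists X0|left].
      - by exists (B `|` X); [exists X|right].
      - by left.
      - by right; exists X.
    apply: Pchain => [_ [X FX <-]|_ _ [X FX <-] [Y FY <-]]; first exact: FP.
    by have [XY|YX] := Ftot X Y FX FY; [left|right]; apply: setUS.
  suff -> : F = set0 by rewrite bigcup_set0 setU0.
  by apply/seteqP; split=> // X FX; apply: F0; exists X.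
exists (B `|` X); split=> [t Bt|//|C [BXC CBX] PC]; first by left.
apply: (Xmax C); last by rewrite setUidr // => t Bt; apply: BXC; left.
split=> [t Xt|CX]; first by apply: BXC; right.
by apply: CBX => t /CX Xt; right.
Qed.

Definition set_embedding X Y (A : set X) (B : set Y) (u : X -> Y) : Prop :=
  (forall x, A x -> B (u x)) /\
  (forall x y, A x -> A y -> u x = u y -> x = y).

Lemma partial_choice X Y (y0 : Y) (A : set X) (P : X -> Y -> Prop) :
  (forall x, A x -> exists y, P x y) -> exists u, forall x, A x -> P x (u x).
Proof.
move=> AP; have : forall x, exists y, A x -> P x y.
  move=> x; case: (pselect (A x)) => [/AP[y Pxy]|nAx]; first by exists y.
  by exists y0 => /nAx.
by case/choice=> u Pu; exists u.
Qed.

Lemma set_embedding_inverse X Y (x0 : X) (A : set X) (B : set Y) (v : X -> Y) :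
  set_embedding A B v ->
  exists r, set_embedding (v @` A) A r /\ forall x, A x -> r (v x) = x.
Proof.
move=> [_ vinj].
have [r rP] : exists r, forall y, (v @` A) y -> A (r y) /\ v (r y) = y.
  by apply: (partial_choice x0 (P := fun y x => A x /\ v x = y)) => _ [x Ax <-];
    exists x.
have rvK x : A x -> r (v x) = x.
  by move=> Ax; have [? ?] := rP (v x) (imageP _ Ax); apply: vinj.
exists r; split=> //; split=> [_ [x Ax <-]|_ _ [x Ax <-] [y Ay <-]].
  by rewrite rvK.
by rewrite !rvK // => ->.
Qed.

Lemma injective_left_inverse X Y (x0 : X) (h : X -> Y) :
  injective h -> exists r, cancel h r.
Proof.
move=> hinj; have [r [_ hK]] := set_embedding_inverse x0 (A := setT) (B := setT)
  (conj (fun _ _ => Logic.I) (fun x y _ _ => @hinj x y)).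
by exists r => x; apply: hK.
Qed.

(* Functional and injective at once. *)
Definition partial_injection X Y (R : set (X * Y)) : Prop :=
  set_pairwise (fun p q => p.1 = q.1 <-> p.2 = q.2) R.

Lemma partial_injection_embedding X Y (A : set X) (B : set Y) (R : set (X * Y))
    (u : X -> Y) :
  R `<=` A `*` B -> partial_injection R -> (forall x, A x -> R (x, u x)) ->
  set_embedding A B u.
Proof.
move=> RAB Rinj Ru; split=> [x /Ru /RAB[]//|x y Ax Ay uxy].
exact: (proj2 (Rinj _ _ (Ru x Ax) (Ru y Ay))).
Qed.

Lemma partial_injection_setU1 X Y (R : set (X * Y)) x y :
  partial_injection R -> ~ (exists y', R (x, y')) -> ~ (exists x', R (x', y)) ->
  partial_injection (R `|` [set (x, y)]).
Proof.
move=> Rinj xR Ry [a b] [c d] [Rab|->] [Rcd|->] /=; first exact: (Rinj _ _ Rab Rcd).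
- by split=> E; [case: xR|case: Ry]; [exists b|exists a]; rewrite -E.
- by split=> E; [case: xR|case: Ry]; [exists d|exists c]; rewrite E.
- by [].
Qed.

Lemma set_embedding_total T (t0 : T) (A B : set T) :
  (exists u, set_embedding A B u) \/ (exists u, set_embedding B A u).
Proof.
pose P (R : set (T * T)) := R `<=` A `*` B /\ partial_injection R.
have [R [_ [RAB Rinj] Rmax]] : exists R, [/\ set0 `<=` R, P R &
    forall C, R `<` C -> ~ P C].
  apply: Zorn_bigcup_above => [|F FP Ftot]; first by split=> // p q.
  split; first by move=> p [R /FP[RAB _] /RAB].
  by apply: bigcup_chain_pairwise Ftot => R /FP[].
have [Rtot|/existsNP[x /not_implyP[Ax xR]]] :=
  pselect (forall x, A x -> exists y, R (x, y)).
  by left; have [u Ru] := partial_choice t0 Rtot; exists u;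
    apply: partial_injection_embedding Ru.
pose Rc := [set p : T * T | R (p.2, p.1)].
have [Rctot|/existsNP[y /not_implyP[By Ry]]] :=
  pselect (forall y, B y -> exists x, Rc (y, x)).
  right; have [u Ru] := partial_choice t0 Rctot; exists u.
  apply: partial_injection_embedding Ru => [[a b] /RAB[]//|p q Rp Rq].
  by have := Rinj _ _ Rp Rq; tauto.
case: (Rmax (R `|` [set (x, y)])); last first.
  split; last exact: partial_injection_setU1.
  by move=> p [/RAB//|->].
split=> [p|]; first by left.
by move/(_ (x, y) (or_intror erefl)) => Rxy; apply: xR; exists y.
Qed.

Lemma infinite_nat_embedding T : infinite T -> exists x : nat -> T, injective x.
Proof.
move=> Tinf.
have [next nextP] : {next : list T -> T & forall l, ~ List.In (next l) l}.
  apply: (choice (P := fun l y => ~ List.In y l)) => l.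
  by apply/existsNP => lT; apply: Tinf; exists l.
pose fix prefix n := if n is n'.+1 then cons (next (prefix n')) (prefix n') else nil.
have prefixP m n : m < n -> List.In (next (prefix m)) (prefix n).
  elim: n => // n IH; rewrite ltnS leq_eqVlt => /orP[/eqP->|/IH]; by [left|right].
exists (fun n => next (prefix n)); move=> m n /= E.
by case: (ltngtP m n) => [/prefixP|/prefixP|//]; [rewrite E|rewrite -E] => /nextP.
Qed.

Section SquareEmbedding.
Variable T : Type.

Definition square_embedding (A : set T) (f : T * T -> T) : Prop :=
  set_embedding (A `*` A) A f.

Lemma set_embedding_setU (A B : set T) f w x0 x1 :
  square_embedding A f -> A x0 -> A x1 -> x0 <> x1 -> set_embedding B A w ->
  exists u, set_embedding (A `|` B) A u.
Proof.
move=> [fA finj] Ax0 Ax1 x01 [wA winj].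
have BnA y : (A `|` B) y -> ~ A y -> B y by case.
exists (fun y => if `[< A y >] then f (y, x0) else f (w y, x1)).
split=> [y ABy|y y' ABy ABy'].
  by case: asboolP => [Ay|nAy]; apply: fA; split=> //; apply/wA/BnA.
case: asboolP => [Ay|nAy]; case: asboolP => [Ay'|nAy'];
  have By := BnA _ ABy; have By' := BnA _ ABy'.
- by move/(finj (_, _) (_, _) (conj Ay Ax0) (conj Ay' Ax0)) => [].
- move/(finj (_, _) (_, _) (conj Ay Ax0) (conj (wA _ (By' nAy')) Ax1)).
  by move=> [_ /x01].
- move/(finj (_, _) (_, _) (conj (wA _ (By nAy)) Ax1) (conj Ay' Ax0)).
  by move=> [_ /esym/x01].
- move/(finj (_, _) (_, _) (conj (wA _ (By nAy)) Ax1) (conj (wA _ (By' nAy')) Ax1)).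
  by move=> [/(winj _ _ (By nAy) (By' nAy'))].
Qed.

Lemma square_embedding_extend (A : set T) f v x0 x1 :
  square_embedding A f -> A x0 -> A x1 -> x0 <> x1 -> set_embedding A (~` A) v ->
  exists f', square_embedding (A `|` v @` A) f' /\
    forall p, (A `*` A) p -> f' p = f p.
Proof.
move=> fAf Ax0 Ax1 x01 vAA; set A' := A `|` v @` A.
have [r [rA _]] := set_embedding_inverse x0 vAA.
(* u codes the enlarged carrier back into A, so the new pairs are sent
   injectively into v @` A, away from the old values. *)
have [u [uA uinj]] := set_embedding_setU fAf Ax0 Ax1 x01 rA.
case: fAf vAA => [fA finj] [vA vinj].
have fuA p : (A' `*` A') p -> A (f (u p.1, u p.2)) by case=> /uA ? /uA ?; apply: fA.
pose f' p := if `[< (A `*` A) p >] then f p else v (f (u p.1, u p.2)).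
exists f'; split=> [|p App]; last by rewrite /f'; case: asboolP.
split=> [p A'p|p q A'p A'q]; rewrite /f'.
  by case: asboolP => [AAp|_]; [left; apply: fA|right; apply/imageP/fuA].
case: asboolP => [Ap|_]; case: asboolP => [Aq|_].
- exact: finj.
- by move=> E; case: (vA _ (fuA _ A'q)); rewrite -E; apply: fA.
- by move=> E; case: (vA _ (fuA _ A'p)); rewrite E; apply: fA.
case: p q A'p A'q => [a b] [c d] [/= A'a A'b] [/= A'c A'd].
move/(vinj _ _ (fuA (a, b) (conj A'a A'b)) (fuA (c, d) (conj A'c A'd))).
have uAA x y : A' x -> A' y -> (A `*` A) (u x, u y) by move=> /uA ? /uA ?.
move/(finj _ _ (uAA _ _ A'a A'b) (uAA _ _ A'c A'd)) => [].
by move=> /(uinj _ _ A'a A'c) -> /(uinj _ _ A'b A'd) ->.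
Qed.

(* Partial maps T * T -> T are handled through their graphs, so that chains
   can be united in Zorn's lemma; the domain is read off the diagonal. *)
Definition carrier (G : set (T * T * T)) : set T := [set a | exists z, G (a, a, z)].

Definition square_graph (G : set (T * T * T)) : Prop :=
  [/\ G `<=` (carrier G `*` carrier G) `*` carrier G, partial_injection G &
      forall a b, carrier G a -> carrier G b -> exists z, G (a, b, z)].

Definition graph_of (A : set T) (f : T * T -> T) : set (T * T * T) :=
  [set t | (A `*` A) t.1 /\ t.2 = f t.1].

Lemma carrier_subset G H : G `<=` H -> carrier G `<=` carrier H.
Proof. by move=> GH a [z /GH Gz]; exists z. Qed.

Lemma carrier_graph_of A f : carrier (graph_of A f) = A.
Proof.
by apply/seteqP; split=> [a [z [[]]]|a Aa] //; exists (f (a, a)).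
Qed.

Lemma square_graph_of A f : square_embedding A f -> square_graph (graph_of A f).
Proof.
case=> fA finj; rewrite /square_graph carrier_graph_of; split.
- by move=> [p z] [Ap /= ->]; split=> //; apply: fA.
- move=> [p z] [q z'] [Ap /= ->] [Aq /= ->] /=.
  by split=> [->|/finj]; last exact.
- by move=> a b Aa Ab; exists (f (a, b)).
Qed.

Lemma square_graph_fun (t0 : T) G : square_graph G ->
  exists f, square_embedding (carrier G) f /\ G = graph_of (carrier G) f.
Proof.
case=> GA Ginj Gtot; set A := carrier G.
have [f Gf] : exists f, forall p, (A `*` A) p -> G (p, f p).
  apply: (partial_choice t0 (P := fun p z => G (p, z))) => -[a b] [/= Aa Ab].
  exact: Gtot.
exists f; split; first exact: partial_injection_embedding Gf.
apply/seteqP; split=> [[p z] Gpz|[p z] [Ap /= ->]]; last exact: Gf.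
have Ap : (A `*` A) p by case: (GA _ Gpz).
by split=> //=; apply/(Ginj _ _ Gpz (Gf _ Ap)).
Qed.

Lemma square_graph_bigcup (F : set (set (T * T * T))) :
  F `<=` square_graph -> total_on F subset -> square_graph (\bigcup_(G in F) G).
Proof.
move=> Fsq Ftot; set U := \bigcup_(G in F) G.
have carrierU G : F G -> carrier G `<=` carrier U.
  by move=> FG; apply/carrier_subset/bigcup_sup.
split.
- move=> t [G FG Gt]; have [GA _ _] := Fsq G FG.
  by case: (GA t Gt) => -[? ?] ?; split; [split|]; apply: carrierU FG _ _.
- by apply: bigcup_chain_pairwise Ftot => G /Fsq[].
move=> a b [za [G FG Ga]] [zb [H FH Hb]].
have [GH|HG] := Ftot G H FG FH.
  have [_ _ Htot] := Fsq H FH.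
  have [z Hz] := Htot a b (ex_intro _ za (GH _ Ga)) (ex_intro _ zb Hb).
  by exists z; exists H.
have [_ _ Gtot] := Fsq G FG.
have [z Gz] := Gtot a b (ex_intro _ za Ga) (ex_intro _ zb (HG _ Hb)).
by exists z; exists G.
Qed.

Lemma square_embedding_nat (x : nat -> T) : injective x ->
  exists f, square_embedding (range x) f.
Proof.
move=> xinj; have [r xK] := injective_left_inverse 0 xinj.
exists (fun p => x (pickle (r p.1, r p.2))); split=> [p|].
  by exists (pickle (r p.1, r p.2)).
move=> [_ _] [_ _] [/= [m _ <-] [n _ <-]] [/= [m' _ <-] [n' _ <-]] /=.
by rewrite !xK => /xinj/(pcan_inj pickleK)[-> ->].
Qed.

End SquareEmbedding.

Lemma infinite_square_injection T : infinite T -> exists h : T * T -> T, injective h.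
Proof.
move=> Tinf; have [x xinj] := infinite_nat_embedding Tinf.
have [f0 f0A] := square_embedding_nat xinj.
have [G [G0G Gsq Gmax]] := Zorn_bigcup_above (square_graph_of f0A)
  (@square_graph_bigcup T).
have [f [fA GE]] := square_graph_fun (x 0) Gsq; set A := carrier G in fA GE.
have xA n : A (x n).
  by apply: (carrier_subset G0G); rewrite carrier_graph_of; exists n.
have x01 : x 0 <> x 1 by move/xinj.
have [[v vA]|[w wA]] := set_embedding_total (x 0) A (~` A).
  have [f' [f'A f'f]] := square_embedding_extend fA (xA 0) (xA 1) x01 vA.
  exfalso; apply: (Gmax (graph_of (A `|` v @` A) f')); last exact: square_graph_of.
  rewrite {1}GE; split=> [[p z] [[/= Ap1 Ap2] /= ->]|G'G].
    by split; [split; left|rewrite f'f].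
  pose t := (v (x 0), v (x 0), f' (v (x 0), v (x 0))).
  have /G'G : graph_of (A `|` v @` A) f' t.
    by split=> //; split; right; exists (x 0).
  by move=> -[[/= Avx _] _]; exact: (proj1 vA _ (xA 0) Avx).
have [u [uA uinj]] := set_embedding_setU fA (xA 0) (xA 1) x01 wA.
have AuA y : (A `|` ~` A) y by rewrite setUv.
exists (fun p => f (u p.1, u p.2)) => -[a b] [c d] /=.
move/(proj2 fA (_, _) (_, _) (conj (uA _ (AuA a)) (uA _ (AuA b)))
  (conj (uA _ (AuA c)) (uA _ (AuA d)))) => -[].
by move=> /(uinj _ _ (AuA a) (AuA c)) -> /(uinj _ _ (AuA b) (AuA d)) ->.
Qed.

Definition bool_le (a b : bool) : Prop := a -> b.

Lemma bool_glb K (f : K -> bool) : is_glb bool_le f `[< forall k, f k >].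
Proof. by split=> [k /asboolP|z zf zt]; [apply|apply/asboolP => k; apply: zf]. Qed.

Lemma bool_lub K (f : K -> bool) : is_lub bool_le f `[< exists k, f k >].
Proof.
by split=> [k fk|z fz /asboolP[k /fz]] //; apply/asboolP; exists k.
Qed.

Lemma bool_I_complete_lattice I : is_I_complete_lattice bool_le I.
Proof.
have glb K (f : K -> bool) := ex_intro _ _ (bool_glb f).
have lub K (f : K -> bool) := ex_intro _ _ (bool_lub f).
split; [split; [split; [|split]|split]|split] => //.
- by move=> a.
- by move=> a b c ab bc /ab/bc.
- by move=> [] [] // ab ba; [have := ab isT|have := ba isT].
Qed.

Section SmallSupport.
Variables I J : Type.

Local Notation prod_bool_le := (@prod_le J (fun _ => bool) (fun _ => bool_le)).

Definition small_support (x : J -> bool) : Prop :=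
  exists g : I -> J, forall j, x j -> exists i, g i = j.

Lemma small_support_le x y : prod_bool_le x y -> small_support y -> small_support x.
Proof. by move=> xy [g gy]; exists g => j /xy/gy. Qed.

Lemma lub_support K (f : K -> J -> bool) m :
  is_lub prod_bool_le f m -> forall j, m j -> exists k, f k j.
Proof.
move=> [fm mleast] j mj; case: (pselect (exists k, f k j)) => // nfj.
have : prod_bool_le m (fun j' => m j' && `[< j' <> j >]).
  apply: mleast => k j' fkj'; apply/andP; split; first exact: fm fkj'.
  by apply/asboolP => j'j; apply: nfj; exists k; rewrite -j'j.
by move/(_ j mj)/andP => [_ /asboolP].
Qed.

Lemma small_support_lub K (c : I -> K) (e : I -> I * I) (f : K -> J -> bool) m :
  (forall k, exists i, c i = k) -> (forall p, exists i, e i = p) ->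
  (forall k, small_support (f k)) -> is_lub prod_bool_le f m -> small_support m.
Proof.
move=> csurj esurj fS mlub.
have [g gP] :=
  choice (P := fun k (g : I -> J) => forall j, f k j -> exists i, g i = j) fS.
exists (fun i => g (c (e i).1) (e i).2) => j /(lub_support mlub)[k fkj].
have [i' <-] := gP k j fkj; have [i ck] := csurj k; have [n en] := esurj (i, i').
by exists n; rewrite en /= ck.
Qed.

Lemma small_support_sublattice (i0 i1 : I) (e : I -> I * I) :
  i0 <> i1 -> (forall p, exists i, e i = p) ->
  is_I_complete_sublattice prod_bool_le I small_support.
Proof.
move=> i01 esurj; split; [|split; [|split]] => f m fS.
- by move=> [mf _]; apply: small_support_le (mf true) (fS true).
- apply: (small_support_lub (c := fun i => `[< i = i0 >]) _ esurj fS).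
  by case; [exists i0; rewrite asboolT|exists i1; rewrite (asboolF (nesym i01))].
- by move=> [mf _]; apply: small_support_le (mf i0) (fS i0).
- by apply: (small_support_lub (c := id) _ esurj fS) => i; exists i.
Qed.

Lemma small_support_pair (i0 i1 : I) k l (a b : bool) : i0 <> i1 -> k <> l ->
  exists x, [/\ small_support x, x k = a & x l = b].
Proof.
move=> i01 kl.
exists (fun j => if `[< j = k >] then a else if `[< j = l >] then b else false).
split; last first.
- by rewrite (asboolF (nesym kl)) asboolT.
- by rewrite asboolT.
exists (fun i => if `[< i = i0 >] then k else l) => j.
case: (asboolP (j = k)) => [-> _|_]; first by exists i0; rewrite asboolT.
case: (asboolP (j = l)) => [-> _|//].
by exists i1; rewrite (asboolF (nesym i01)).
Qed.

Lemma not_small_support_true :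
  ~ (exists g : J -> I, injective g) -> ~ small_support (fun _ => true).
Proof.
move=> noJI [g gP]; apply: noJI.
have [s sP] := choice (P := fun j i => g i = j) (fun j => gP j isT).
by exists s => j j' sjj'; rewrite -(sP j) -(sP j') sjj'.
Qed.

End SmallSupport.

Theorem proposition4p11 (I J : Type) :
  infinite I -> infinite J -> card_lt I J ->
  exists (L : J -> Type) (le : forall j, L j -> L j -> Prop),
    (forall j, is_I_complete_lattice (le j) I) /\
    exists S T : (forall j, L j) -> Prop,
      is_I_complete_sublattice (@prod_le J L le) I S /\
      is_I_complete_sublattice (@prod_le J L le) I T /\
      (exists x, ~ (S x <-> T x)) /\
      (forall k l : J, k <> l ->
         forall p : L k * L l, @proj2_image J L S k l p <-> @proj2_image J L T k l p).
Proof.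
move=> Iinf _ [_ noJI].
have [x xinj] := infinite_nat_embedding Iinf.
have x01 : x 0 <> x 1 by move/xinj.
have [h hinj] := infinite_square_injection Iinf.
have [e hK] := injective_left_inverse (x 0, x 0) hinj.
have esurj p : exists i, e i = p by exists (h p).
exists (fun _ => bool), (fun _ => bool_le).
split=> [j|]; first exact: bool_I_complete_lattice.
exists (@small_support I J), (fun _ => True); split; [|split; [|split]].
- exact: small_support_sublattice x01 esurj.
- by do !split.
- by exists (fun _ => true) => -[_ /(_ Logic.I)]; apply: not_small_support_true.
move=> k l kl [a b]; split=> [[y [_ yab]]|_]; first by exists y.
by have [y [yS yk yl]] := small_support_pair a b x01 kl; exists y; do !split.
Qed.
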